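(* Let $\mathcal H$ be a Hilbert space of finite dimension $d$, let $\{|e_s\rangle\}_{s=0}^{d-1}$ be an orthonormal basis of $\mathcal H$, let $\{\lambda_s\}_{s=0}^{d-1}$ be a probability distribution, and let $V=\sum_{s=0}^{d-1}\exp\!\left(i\frac{2\pi s}{d}\right)|e_s\rangle\langle e_s|$. Let $\Phi$ be the phase damping channel $\Phi(\rho)=\sum_{j=0}^{d-1}\lambda_j V^j\rho V^{*j}$ on $\mathfrak S(\mathcal H)$. Let $\mathcal A$ be the set of states on $\mathcal H$ that can be written as convex combinations of pure states $|f\rangle\langle f|$ satisfying $|\langle f|e_s\rangle|=\frac{1}{\sqrt d}$ for all $0\le s\le d-1$. Then for every $\rho\in\mathcal A$, $$H_\Phi(\rho)\le -\sum_{j=0}^{d-1}\lambda_j\log\lambda_j .$$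
   Context: $\mathfrak S(\mathcal H)$ denotes the set of density operators (positive, unit-trace operators) on $\mathcal H$, and $S(\sigma)=-\mathrm{Tr}(\sigma\log\sigma)$ is the von Neumann entropy. For a quantum channel (completely positive trace-preserving linear map) $\Phi$ with input space $\mathcal H$, and $\rho\in\mathfrak S(\mathcal H)$, $H_\Phi(\rho):=\min\sum_{j=1}^k\pi_jS(\Phi(\rho_j))$, where the minimum is over all finite decompositions $\rho=\sum_{j=1}^k\pi_j\rho_j$ with $\{\pi_j\}$ a probability distribution and $\rho_j\in\mathfrak S(\mathcal H)$. *)

From HB Require Import structures.
From mathcomp Require Import all_boot all_order all_algebra.
From mathcomp Require Import complex.
From mathcomp Require Import boolp reals exp trigo.
Set Implicit Arguments. Unset Strict Implicit. Unset Printing Implicit Defensive.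
Import Order.TTheory GRing.Theory Num.Theory.
Local Open Scope ring_scope.
Local Open Scope complex_scope.

Section QDefs.
Variables (R : realType) (d : nat).
Local Notation C := R[i].
Local Notation M := 'M[C]_d.

Definition adjmx m n (A : 'M[C]_(m, n)) : 'M[C]_(n, m) := (map_mx (@conjc R) A)^T.

Definition psd (A : M) : Prop :=
  adjmx A = A /\ forall v : 'cV[C]_d, 0 <= (adjmx v *m A *m v) 0 0.

Definition density (A : M) : Prop := psd A /\ \tr A = 1.

Definition unitary (U : M) : Prop := U *m adjmx U = 1%:M.

Definition spectral_decomp (A : M) (p : M * 'rV[R]_d) : Prop :=
  unitary p.1 /\ A = p.1 *m diag_mx (map_mx (fun x => x%:C) p.2) *m adjmx p.1.

(* von Neumann entropy S(A) = - Tr (A log A) = - sum_i mu_i ln mu_i over the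
   eigenvalues mu_i of A (convention 0 ln 0 = 0; MathComp-Analysis has ln 0 = 0). *)
Definition entropy (A : M) : R :=
  match pselect (exists p, spectral_decomp A p) with
  | left h => let p := projT1 (cid h) in - \sum_(i < d) p.2 0 i * ln (p.2 0 i)
  | right _ => 0
  end.

(* H_Phi(rho) <= c : since H_Phi(rho) is a minimum over finite decompositions
   rho = sum_j pi_j rho_j, this holds iff some decomposition achieves <= c. *)
Definition HPhi_le (Phi : M -> M) (rho : M) (c : R) : Prop :=
  exists (k : nat) (pi : 'I_k -> R) (rhos : 'I_k -> M),
    [/\ forall j, 0 <= pi j, \sum_j pi j = 1, forall j, density (rhos j),
        rho = \sum_j (pi j)%:C *: rhos j
      & \sum_j pi j * entropy (Phi (rhos j)) <= c].

End QDefs.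

Definition mxpow (R : realType) (d : nat) (V : 'M[R[i]]_d) (j : nat) : 'M[R[i]]_d :=
  iter j (mulmx V) 1%:M.

(* Write Phi(|f><f|) = sum_j lam_j |V^j f><V^j f|.  If |<f|e_s>|^2 = 1/d for
   every s, then <V^j f, V^l f> = (1/d) sum_s omega^(s (l - j)) vanishes for
   j <> l, so the V^j f form an orthonormal basis and lam is a spectrum of
   Phi(|f><f|).  Any spectral decomposition U diag(mu) U^* of the same operator
   differs by a unitary Q, and lam_j = sum_i |Q_ij|^2 mu_i is the image of mu
   under a doubly stochastic matrix, which cannot lower the Shannon entropy
   (termwise ln t <= t - 1).  Hence S(Phi(|f><f|)) <= H(lam) for every pure
   state in A, and the decomposition rho = sum_k p_k |f_k><f_k| witnesses the
   bound on H_Phi(rho). *)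

From HB Require Import structures.
From mathcomp Require Import all_boot all_order all_algebra.
From mathcomp Require Import complex.
From mathcomp Require Import boolp reals exp trigo.
From mathcomp Require Import ring lra.
Set Implicit Arguments. Unset Strict Implicit. Unset Printing Implicit Defensive.
Import Order.TTheory GRing.Theory Num.Theory.
Local Open Scope complex_scope.
Local Open Scope ring_scope.

Section Shannon.
Variable R : realType.

Definition shannon n (p : 'I_n -> R) : R := - \sum_i p i * ln (p i).

Lemma shannon_ge0 n (p : 'I_n -> R) :
  (forall i, 0 <= p i) -> \sum_i p i = 1 -> 0 <= shannon p.
Proof.
move=> p_ge0 p_sum1; rewrite oppr_ge0; apply: sumr_le0 => i _.
apply: mulr_ge0_le0 => //; apply: ln_le0.
by rewrite -p_sum1 (bigD1 i) //= lerDl sumr_ge0.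
Qed.

(* [ln t <= t - 1] at [t = lam / mu], weighted by [b * mu]; the hypothesis
   [b * mu <= lam] makes [lam] positive whenever [b * mu] is. *)
Lemma mulr_sub_le_ln_ratio (b mu lam : R) : 0 <= b -> 0 <= mu -> b * mu <= lam ->
  b * (mu - lam) <= b * mu * (ln mu - ln lam).
Proof.
move=> b_ge0 mu_ge0 le_lam.
have [->|b_neq0] := eqVneq b 0; first by rewrite !mul0r.
have [mu0|mu_neq0] := eqVneq mu 0.
  move: le_lam; rewrite mu0 mulr0 mul0r sub0r mulrN oppr_le0 => ?.
  exact: mulr_ge0.
have mu_gt0 : 0 < mu by rewrite lt_def mu_neq0.
have lam_gt0 : 0 < lam by apply: lt_le_trans le_lam; rewrite mulr_gt0 // lt_def b_neq0.
rewrite -mulrA ler_wpM2l //.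
have ratio_gt0 : 0 < lam / mu by rewrite divr_gt0.
have : ln (lam / mu) <= lam / mu - 1.
  by have := @le_ln1Dx R (lam / mu - 1); rewrite subrKC; apply; lra.
rewrite ln_div ?posrE // => /(ler_wpM2l (ltW mu_gt0)).
by rewrite !mulrBr mulrCA mulfV ?gt_eqF // !mulr1; lra.
Qed.

Lemma shannon_le_doubly_stochastic n (b : 'I_n -> 'I_n -> R) (mu lam : 'I_n -> R) :
  (forall i j, 0 <= b i j) -> (forall i, \sum_j b i j = 1) ->
  (forall j, \sum_i b i j = 1) -> (forall i, 0 <= mu i) ->
  (forall j, lam j = \sum_i b i j * mu i) ->
  shannon mu <= shannon lam.
Proof.
move=> b_ge0 row_sum1 col_sum1 mu_ge0 lamE.
have le_lam i j : b i j * mu i <= lam j.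
  by rewrite lamE (bigD1 i) //= lerDl sumr_ge0 // => k _; rewrite mulr_ge0.
have termwise : \sum_i \sum_j b i j * (mu i - lam j) <=
                \sum_i \sum_j b i j * mu i * (ln (mu i) - ln (lam j)).
  by do 2![apply: ler_sum => ? _]; apply: mulr_sub_le_ln_ratio.
have lhs0 : \sum_i \sum_j b i j * (mu i - lam j) = 0.
  under eq_bigr do rewrite (eq_bigr _ (fun j _ => mulrBr _ _ _)) sumrB -mulr_suml row_sum1 mul1r.
  rewrite sumrB exchange_big /=.
  under [X in _ - X]eq_bigr do rewrite -mulr_suml col_sum1 mul1r.
  apply/eqP; rewrite subr_eq0 (eq_bigr _ (fun j _ => lamE j)) exchange_big /=; apply/eqP.
  by apply: eq_bigr => i _; rewrite -mulr_suml row_sum1 mul1r.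
have rhsE : \sum_i \sum_j b i j * mu i * (ln (mu i) - ln (lam j)) =
            shannon lam - shannon mu.
  rewrite /shannon opprK addrC.
  under eq_bigr do rewrite (eq_bigr _ (fun j _ => mulrBr _ _ _)) sumrB -mulr_suml
    -mulr_suml row_sum1 mul1r.
  rewrite sumrB exchange_big /=; congr (_ - _).
  by apply: eq_bigr => j _; rewrite -mulr_suml -lamE.
by move: termwise; rewrite lhs0 rhsE subr_ge0.
Qed.

End Shannon.

Section ComplexMatrices.
Variable R : realType.
Local Notation C := R[i].

Definition sqnorm (z : C) : R := complex.Re z ^+ 2 + complex.Im z ^+ 2.

Lemma sqnorm_ge0 (z : C) : 0 <= sqnorm z.
Proof. by rewrite addr_ge0 ?sqr_ge0. Qed.

Lemma sqnormE (z : C) : (sqnorm z)%:C = z * z^*.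
Proof. by rewrite add_Re2_Im2 sqr_normc. Qed.

Lemma sqnormJ (z : C) : sqnorm z^* = sqnorm z.
Proof. by case: z => a b; rewrite /sqnorm /= sqrrN. Qed.

Lemma adjmxE m n (A : 'M[C]_(m, n)) i j : adjmx A i j = (A j i)^*.
Proof. by rewrite !mxE. Qed.

Lemma adjmxM m n p (A : 'M[C]_(m, n)) (B : 'M[C]_(n, p)) :
  adjmx (A *m B) = adjmx B *m adjmx A.
Proof. by rewrite /adjmx map_mxM trmx_mul. Qed.

Lemma adjmxK m n (A : 'M[C]_(m, n)) : adjmx (adjmx A) = A.
Proof. by apply/matrixP => i j; rewrite !adjmxE conjCK. Qed.

Definition diagC n (r : 'I_n -> R) : 'M[C]_n := diag_mx (\row_j (r j)%:C).

Lemma diagC_map n (r : 'rV[R]_n) : diag_mx (map_mx (fun x => x%:C) r) = diagC (r 0).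
Proof. by congr diag_mx; apply/rowP => j; rewrite !mxE. Qed.

Lemma diagC_entry n (r : 'I_n -> R) i : diagC r i i = (r i)%:C.
Proof. by rewrite !mxE eqxx mulr1n. Qed.

Lemma mulmx_adjmx_entry m n (X : 'M[C]_(m, n)) i :
  (X *m adjmx X) i i = (\sum_j sqnorm (X i j))%:C.
Proof. by rewrite mxE rmorph_sum; apply: eq_bigr => j _; rewrite adjmxE -sqnormE. Qed.

Lemma conj_diagC_entry n (X : 'M[C]_n) (r : 'I_n -> R) i :
  (X *m diagC r *m adjmx X) i i = (\sum_j r j * sqnorm (X i j))%:C.
Proof.
rewrite mxE rmorph_sum; apply: eq_bigr => j _.
by rewrite mul_mx_diag !mxE rmorphM mulrAC -sqnormE mulrC.
Qed.

(* [|Q i j|^2] is doubly stochastic and carries [mu] to [lam]. *)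
Lemma shannon_le_unitary_conj n (Q : 'M[C]_n) (lam mu : 'I_n -> R) :
  Q *m adjmx Q = 1%:M -> (forall j, 0 <= lam j) ->
  Q *m diagC lam *m adjmx Q = diagC mu -> shannon mu <= shannon lam.
Proof.
move=> QQ lam_ge0 conj_lam.
have QQ' := mulmx1C QQ.
have conj_mu : adjmx Q *m diagC mu *m Q = diagC lam.
  by rewrite -conj_lam !mulmxA QQ' mul1mx -mulmxA QQ' mulmx1.
have real_one : (1%:M : 'M[C]_n) = diagC (fun=> 1).
  by apply/matrixP => i j; rewrite !mxE.
apply: (@shannon_le_doubly_stochastic _ _ (fun i j => sqnorm (Q i j))).
- by move=> i j; apply: sqnorm_ge0.
- move=> i; apply: complexI.
  by rewrite -mulmx_adjmx_entry QQ real_one diagC_entry.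
- move=> j; apply: complexI.
  rewrite (eq_bigr (fun i => sqnorm (adjmx Q j i))); last by move=> i _; rewrite adjmxE sqnormJ.
  by rewrite -mulmx_adjmx_entry adjmxK QQ' real_one diagC_entry.
- move=> i; have := conj_diagC_entry Q lam i; rewrite conj_lam diagC_entry => /complexI ->.
  by apply: sumr_ge0 => j _; rewrite mulr_ge0 ?sqnorm_ge0.
- move=> j; have := conj_diagC_entry (adjmx Q) mu j.
  rewrite adjmxK conj_mu diagC_entry => /complexI ->.
  by apply: eq_bigr => i _; rewrite adjmxE sqnormJ mulrC.
Qed.

Lemma shannon_le_diag_decompositions n (W U : 'M[C]_n) (lam mu : 'I_n -> R) :
  adjmx W *m W = 1%:M -> U *m adjmx U = 1%:M -> (forall j, 0 <= lam j) ->
  W *m diagC lam *m adjmx W = U *m diagC mu *m adjmx U -> shannon mu <= shannon lam.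
Proof.
move=> WW UU lam_ge0 eqWU; have U'U := mulmx1C UU.
apply: (@shannon_le_unitary_conj _ (adjmx U *m W)) => //.
  by rewrite adjmxM adjmxK !mulmxA -(mulmxA _ W) (mulmx1C WW) mulmx1 U'U.
rewrite adjmxM adjmxK !mulmxA -(mulmxA _ W) -(mulmxA _ (W *m _)) eqWU.
by rewrite !mulmxA U'U mul1mx -mulmxA U'U mulmx1.
Qed.

Lemma entropy_le_shannon n (W : 'M[C]_n) (lam : 'I_n -> R) :
  adjmx W *m W = 1%:M -> (forall j, 0 <= lam j) -> \sum_j lam j = 1 ->
  entropy (W *m diagC lam *m adjmx W) <= shannon lam.
Proof.
move=> WW lam_ge0 lam_sum1; rewrite /entropy.
case: pselect => [ex|_]; last exact: shannon_ge0.
case: (cid ex) => -[U mu] [/= UU]; rewrite diagC_map => eqWU.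
exact: (shannon_le_diag_decompositions WW UU lam_ge0 eqWU).
Qed.

Lemma mul_diag_adj_sum_cols m n (X : 'M[C]_(m, n)) (a : 'I_n -> C) :
  X *m diag_mx (\row_s a s) *m adjmx X = \sum_s a s *: (col s X *m adjmx (col s X)).
Proof.
apply/matrixP => i k; rewrite summxE mxE; apply: eq_bigr => s _.
by rewrite mul_mx_diag !mxE big_ord1 !mxE mulrCA mulrA.
Qed.

Definition mx_of_cols m n (g : 'I_n -> 'cV[C]_m) : 'M[C]_(m, n) := \matrix_(a, j) g j a 0.

Lemma col_mx_of_cols m n (g : 'I_n -> 'cV[C]_m) j : col j (mx_of_cols g) = g j.
Proof. by apply/colP => a; rewrite !mxE. Qed.

Lemma mx_of_cols_orthonormal m n (g : 'I_n -> 'cV[C]_m) :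
  (forall j l, (adjmx (g j) *m g l) 0 0 = (j == l)%:R) ->
  adjmx (mx_of_cols g) *m mx_of_cols g = 1%:M.
Proof.
move=> gram; apply/matrixP => j l; rewrite [RHS]mxE -gram !mxE.
by apply: eq_bigr => a _; rewrite !mxE.
Qed.

Lemma density_outer n (f : 'cV[C]_n) : adjmx f *m f = 1%:M -> density (f *m adjmx f).
Proof.
move=> f_unit; split; last by rewrite mxtrace_mulC f_unit mxtrace1.
split=> [|v]; first by rewrite adjmxM adjmxK.
rewrite (_ : _ *m _ *m v = (adjmx v *m f) *m adjmx (adjmx v *m f)).
  by rewrite mulmx_adjmx_entry ler0c sumr_ge0 // => j _; apply: sqnorm_ge0.
by rewrite adjmxM adjmxK !mulmxA.
Qed.

End ComplexMatrices.

Lemma cos_lt1 (R : realType) (x : R) : 0 < x -> x < pi *+ 2 -> cos x < 1.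
Proof.
move=> x_gt0 x_lt2pi; have pi_gt0 := pi_gt0 R.
have cos_lt1_upto_pi y : 0 < y -> y <= pi -> cos y < 1.
  move=> y_gt0 y_lepi.
  by rewrite -cos0 ltr_cos //; rewrite in_itv /=; apply/andP; split; lra.
have [|pi_ltx] := leP x pi; first exact: cos_lt1_upto_pi.
rewrite -cosN -(cosD2pi (- x)); apply: cos_lt1_upto_pi; rewrite mulr2n; lra.
Qed.

Lemma sum_expr_unity_root_eq0 (F : fieldType) (n : nat) (z : F) :
  z ^+ n = 1 -> z != 1 -> \sum_(s < n) z ^+ s = 0.
Proof.
move=> zn1 z_neq1; have /esym/eqP := subrX1 z n.
by rewrite zn1 subrr mulf_eq0 subr_eq0 (negbTE z_neq1) => /eqP.
Qed.

Section PrimitiveRoot.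
Variables (R : realType) (d : nat).
Local Notation C := R[i].

Definition omega : C := cos (2 * pi / d%:R) +i* sin (2 * pi / d%:R).

Lemma omega_expr s :
  omega ^+ s = cos (2 * pi * s%:R / d%:R) +i* sin (2 * pi * s%:R / d%:R).
Proof.
rewrite /omega; set t := 2 * pi / d%:R.
have -> : 2 * pi * s%:R / d%:R = s%:R * t by rewrite /t; ring.
elim: s => [|s IH]; first by rewrite mul0r cos0 sin0.
rewrite exprS IH mulrSr mulrDl mul1r cosD sinD.
by apply/eqP; rewrite eq_complex /=; apply/andP; split; apply/eqP; ring.
Qed.

Lemma conj_omega : omega^* * omega = 1.
Proof. by rewrite mulrC -sqnormE /sqnorm /= cos2Dsin2. Qed.

Lemma omega_prim : (0 < d)%N -> d.-primitive_root omega.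
Proof.
move=> d_gt0; apply/andP; split => //; apply/forallP => i; rewrite unity_rootE.
have d_neq0 : d%:R != 0 :> R by rewrite pnatr_eq0 -lt0n.
have [->|i_neqd] := eqVneq i.+1 d.
  rewrite omega_expr -mulrA mulfV // mulr1 mulr_natl cos2pi sin2pi.
  by rewrite eqxx.
apply/eqP/negbTE; rewrite omega_expr; apply/negP => /eqP[cos_eq1 _].
have i_ltd : (i.+1 < d)%N by rewrite ltn_neqAle i_neqd ltn_ord.
have ratio_lt1 : i.+1%:R / d%:R < 1 :> R by rewrite ltr_pdivrMr ?ltr0n // mul1r ltr_nat.
have ratio_gt0 : 0 < i.+1%:R / d%:R :> R by rewrite divr_gt0 ?ltr0n.
have pi_gt0 := pi_gt0 R.
have angle_gt0 : 0 < 2 * pi * (i.+1%:R / d%:R) :> R.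
  by apply: mulr_gt0 => //; apply: mulr_gt0.
have angle_lt2pi : 2 * pi * (i.+1%:R / d%:R) < pi *+ 2 :> R by rewrite mulr2n; nra.
by have := cos_lt1 angle_gt0 angle_lt2pi; rewrite mulrA cos_eq1 ltxx.
Qed.

End PrimitiveRoot.

Lemma sum_expr_conj_prim_root (R : realType) n (z : R[i]) (j l : 'I_n) :
  n.-primitive_root z -> z^* * z = 1 ->
  \sum_(s < n) ((z ^+ j)^* * z ^+ l) ^+ s = if j == l then n%:R else 0.
Proof.
move=> prim_z unit_z.
have conj_zjK : (z ^+ j)^* * z ^+ j = 1 by rewrite rmorphXn -exprMn unit_z expr1n.
have [<-|j_neq_l] := eqVneq j l.
  by rewrite conj_zjK; under eq_bigr do rewrite expr1n; rewrite sumr_const card_ord.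
apply: sum_expr_unity_root_eq0.
  rewrite exprMn -rmorphXn -!exprM !(mulnC _ n) !exprM (prim_expr_order prim_z).
  by rewrite !expr1n rmorph1 mulr1.
move: j_neq_l; apply: contra => /eqP u_eq1; apply/eqP/val_inj/eqP.
have : z ^+ l = z ^+ j by rewrite -[LHS]mul1r -conj_zjK -mulrA mulrCA u_eq1 mulr1.
by move/eqP; rewrite (eq_prim_root_expr prim_z) !modn_small // eq_sym.
Qed.

Section PhaseDamping.
Variables (R : realType) (d : nat) (E : 'M[R[i]]_d).
Local Notation C := R[i].
Hypothesis unitaryE : adjmx E *m E = 1%:M.

Lemma mxpow_conj_diag (a : 'I_d -> C) j :
  mxpow (E *m diag_mx (\row_s a s) *m adjmx E) j =
  E *m diag_mx (\row_s a s ^+ j) *m adjmx E.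
Proof.
elim: j => [|j IH].
  rewrite (_ : diag_mx _ = 1%:M) ?mulmx1 ?(mulmx1C unitaryE) //.
  by apply/matrixP => k k'; rewrite !mxE expr0.
rewrite /mxpow /= -/(mxpow _ j) IH !mulmxA -(mulmxA _ (adjmx E)) unitaryE mulmx1.
rewrite -(mulmxA E) mulmx_diag; congr (_ *m diag_mx _ *m _).
by apply/rowP => s; rewrite !mxE exprS.
Qed.

Local Notation clock := (E *m diag_mx (\row_s omega R d ^+ s) *m adjmx E).

Lemma clock_orbit_orthonormal (f : 'cV[C]_d) (j l : 'I_d) :
  (forall s, `|(adjmx f *m col s E) 0 0| = ((Num.sqrt (d%:R : R))^-1)%:C) ->
  (adjmx (mxpow clock j *m f) *m (mxpow clock l *m f)) 0 0 = (j == l)%:R.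
Proof.
move=> unbiased_f; set c := adjmx E *m f.
have d_gt0 : (0 < d)%N by apply: leq_ltn_trans (ltn_ord j).
have orbitE k : mxpow clock k *m f = E *m (diag_mx (\row_s (omega R d ^+ s) ^+ k) *m c).
  by rewrite mxpow_conj_diag !mulmxA.
have sqnorm_c s : (c s 0)^* * c s 0 = (d%:R^-1 : R)%:C.
  have adj_c : (adjmx f *m col s E) 0 0 = (c s 0)^*.
    rewrite -[col s E]adjmxK -adjmxM adjmxE; congr (_^*).
    by rewrite !mxE; apply: eq_bigr => a _; rewrite !mxE.
  rewrite -normCKC -norm_conjC -adj_c unbiased_f -rmorphXn exprVn.
  by rewrite sqr_sqrtr ?ler0n.
rewrite !orbitE adjmxM -mulmxA (mulmxA (adjmx E)) unitaryE mul1mx mxE; clearbody c.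
have termE s : (adjmx (diag_mx (\row_s (omega R d ^+ s) ^+ j) *m c)) 0 s *
    (diag_mx (\row_s (omega R d ^+ s) ^+ l) *m c) s 0 =
    (d%:R^-1 : R)%:C * ((omega R d ^+ j)^* * omega R d ^+ l) ^+ s.
  rewrite adjmxE !mul_diag_mx !mxE rmorphM mulrACA sqnorm_c mulrC; congr (_ * _).
  by rewrite -!exprM !(mulnC s) !exprM rmorphXn -exprMn.
rewrite (eq_bigr _ (fun s _ => termE s)) -mulr_sumr.
rewrite (sum_expr_conj_prim_root _ _ (omega_prim R d_gt0) (conj_omega R d)).
case: (j == l); last by rewrite mulr0.
by rewrite -(rmorph_nat (real_complex R)) -rmorphM mulVf ?rmorph1 // pnatr_eq0 -lt0n.
Qed.

Lemma clock_spectral :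
  \sum_(s < d) (cos (2 * pi * s%:R / d%:R) +i* sin (2 * pi * s%:R / d%:R))
                *: (col s E *m adjmx (col s E)) = clock.
Proof.
by rewrite mul_diag_adj_sum_cols; apply: eq_bigr => s _; rewrite omega_expr.
Qed.

Lemma phase_damping_pure_entropy (lam : 'I_d -> R) (f : 'cV[C]_d) :
  (forall j, 0 <= lam j) -> \sum_j lam j = 1 ->
  (forall s, `|(adjmx f *m col s E) 0 0| = ((Num.sqrt (d%:R : R))^-1)%:C) ->
  entropy (\sum_j (lam j)%:C *: (mxpow clock j *m (f *m adjmx f) *m adjmx (mxpow clock j)))
  <= shannon lam.
Proof.
move=> lam_ge0 lam_sum1 unbiased_f.
pose orbit := mx_of_cols (fun j : 'I_d => mxpow clock j *m f).
have -> : \sum_j (lam j)%:C *: (mxpow clock j *m (f *m adjmx f) *m adjmx (mxpow clock j))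
          = orbit *m diagC lam *m adjmx orbit.
  rewrite /diagC [RHS]mul_diag_adj_sum_cols; apply: eq_bigr => j _.
  by rewrite col_mx_of_cols adjmxM !mulmxA.
apply: entropy_le_shannon => //; apply: mx_of_cols_orthonormal => j l.
exact: clock_orbit_orthonormal.
Qed.

End PhaseDamping.

Theorem proposition1 (R : realType) (d : nat) (E : 'M[R[i]]_d) (lam : 'I_d -> R) :
  adjmx E *m E = 1%:M ->
  (forall j, 0 <= lam j) -> \sum_(j < d) lam j = 1 ->
  let V : 'M[R[i]]_d :=
    \sum_(s < d) (cos (2 * pi * s%:R / d%:R) +i* sin (2 * pi * s%:R / d%:R))
                  *: (col s E *m adjmx (col s E)) in
  let Phi (rho : 'M[R[i]]_d) : 'M[R[i]]_d :=
    \sum_(j < d) (lam j)%:C *: (mxpow V j *m rho *m adjmx (mxpow V j)) in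
  forall rho : 'M[R[i]]_d,
    (exists (k : nat) (p : 'I_k -> R) (f : 'I_k -> 'cV[R[i]]_d),
        [/\ forall j, 0 <= p j, \sum_(j < k) p j = 1,
            forall j, adjmx (f j) *m f j = 1%:M,
            forall j (s : 'I_d),
              `|(adjmx (f j) *m col s E) 0 0| = ((Num.sqrt (d%:R : R))^-1)%:C
          & rho = \sum_(j < k) (p j)%:C *: (f j *m adjmx (f j))]) ->
    HPhi_le Phi rho (- \sum_(j < d) lam j * ln (lam j)).
Proof.
move=> unitaryE lam_ge0 lam_sum1 V Phi rho [k [p [f [p_ge0 p_sum1 f_unit f_unbiased ->]]]].
exists k, p, (fun j => f j *m adjmx (f j)); split=> // [j|].
  exact: density_outer.
rewrite -[X in _ <= X]mul1r -p_sum1 mulr_suml ler_sum // => j _.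
rewrite ler_wpM2l // /Phi /V clock_spectral.
exact: phase_damping_pure_entropy.
Qed.
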